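(* Let $u,v$ be two words, and $a$ be a letter. Then, \begin{equation} uav = \sum_{u_1u_2=u}(-1)^{|u_2|}u_1 \sqcup\!\sqcup (a(\overline{u_2} \sqcup\!\sqcup v)). \end{equation}
   Context: Words are over a totally ordered alphabet (e.g. the positive integers), and identities are taken in the free $\mathbb{Z}$-module spanned by words. Here $\sqcup\!\sqcup$ denotes the (ordinary) shuffle product of words, extended bilinearly; juxtaposition denotes concatenation (so $a(w)$ means the letter $a$ concatenated in front of each word of $w$); the sum runs over all factorizations $u=u_1u_2$ of $u$ as a concatenation of two (possibly empty) words; $|u_2|$ is the length of $u_2$; and $\overline{u_2}$ denotes the reversal (mirror image) of the word $u_2$. For example, $1234 = 12\sqcup\!\sqcup 34 - 1\sqcup\!\sqcup 3(2\sqcup\!\sqcup 4)+3(21\sqcup\!\sqcup 4)$. *)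

From mathcomp Require Import all_boot all_order all_algebra.
Set Implicit Arguments. Unset Strict Implicit. Unset Printing Implicit Defensive.
Import GRing.Theory.
Local Open Scope ring_scope.

(* Words over the totally ordered alphabet nat (positive integers embed). *)
Definition word := seq nat.

(* Elements of the free Z-module on words, represented as finite formal sums
   (lists of (coefficient, word) pairs); two such represent the same element
   iff they have the same coefficient on every word (see [coef]). *)
Definition lc := seq (int * word).

Definition coef (x : lc) (w : word) : int :=
  \sum_(p <- x | p.2 == w) p.1.

Fixpoint shuffle (u v : word) {struct u} : seq word :=
  match u with
  | [::] => [:: v]
  | a :: u' =>
      let fix sh_aux (v : word) : seq word :=
        match v with
        | [::] => [:: u]
        | b :: v' => map (cons a) (shuffle u' v) ++ map (cons b) (sh_aux v')
        end
      in sh_aux v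
  end.

Definition lc_shuffle (x y : lc) : lc :=
  flatten [seq [seq (p.1 * q.1, w) | w <- shuffle p.2 q.2] | p <- x, q <- y].

Definition lc_word (w : word) : lc := [:: (1, w)].

Definition lc_prepend (a : nat) (x : lc) : lc := [seq (p.1, a :: p.2) | p <- x].

Definition lc_scale (c : int) (x : lc) : lc := [seq (c * p.1, p.2) | p <- x].

(* RHS: sum over factorizations u = u1 u2 (u1 = take i u, u2 = drop i u,
   i = 0..|u|) of (-1)^|u2| u1 ⧢ (a (rev u2 ⧢ v)). *)
Definition rhs7 (u v : word) (a : nat) : lc :=
  flatten [seq lc_scale ((-1) ^+ size (drop i u))
             (lc_shuffle (lc_word (take i u))
                (lc_prepend a (lc_shuffle (lc_word (rev (drop i u))) (lc_word v))))
          | i <- iota 0 (size u).+1].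

From mathcomp Require Import all_boot all_order all_algebra.
Set Implicit Arguments.
Unset Strict Implicit.
Unset Printing Implicit Defensive.
Import GRing.Theory.
Local Open Scope ring_scope.

(* For a letter e, deleting a leading e (and killing the words that do not
   start with e) is a derivation of the shuffle product.  Apply it to both
   sides, i.e. compare coefficients of e :: w by induction on w.  On the right,
   the terms where e is the first letter of u1 give the identity for the tail
   of u, and the terms where e is the inserted letter a add up to
   (sum_(u1 u2 = u) (-1)^|u2| u1 ⧢ rev u2) ⧢ v, which vanishes for u <> [::].
   That antipode identity is proved by the same induction: the terms where e is
   the first letter of u1 cancel those where e is the first letter of rev u2,
   i.e. the last letter of u. *)

Definition shuffle_coef (x y w : word) : int := \sum_(t <- shuffle x y) (t == w)%:R.

Lemma shuffle_nil_r (x : word) : shuffle x [::] = [:: x].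
Proof. by case: x. Qed.

Lemma shuffle_cons (c d : nat) (x y : word) : shuffle (c :: x) (d :: y) =
  map (cons c) (shuffle x (d :: y)) ++ map (cons d) (shuffle (c :: x) y).
Proof. by []. Qed.

Lemma big_shuffle_ohead (e : nat) (x y : word) (g : word -> int) :
  \sum_(t <- shuffle x y) (ohead t == Some e)%:R * g (behead t) =
    (ohead x == Some e)%:R * \sum_(t <- shuffle (behead x) y) g t +
    (ohead y == Some e)%:R * \sum_(t <- shuffle x (behead y)) g t.
Proof.
case: x => [|c x]; case: y => [|d y].
- by rewrite big_seq1 /= !mul0r addr0.
- by rewrite /= !big_seq1 mul0r add0r.
- by rewrite /= shuffle_nil_r !big_seq1 mul0r addr0.
by rewrite shuffle_cons big_cat !big_map !mulr_sumr.
Qed.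

Lemma shuffle_coef_nil (x y : word) :
  shuffle_coef x y [::] = ((x == [::]) && (y == [::]))%:R.
Proof.
case: x => [|c x]; case: y => [|d y]; rewrite /shuffle_coef ?big_seq1 //.
by rewrite shuffle_cons big_cat !big_map !big1.
Qed.

Lemma shuffle_coef_cons (e : nat) (x y w : word) : shuffle_coef x y (e :: w) =
  (ohead x == Some e)%:R * shuffle_coef (behead x) y w +
  (ohead y == Some e)%:R * shuffle_coef x (behead y) w.
Proof.
rewrite -big_shuffle_ohead; apply: eq_bigr => -[|c t] _ /=; first by rewrite mul0r.
by rewrite -natrM mulnb eqseq_cons (inj_eq Some_inj).
Qed.

Definition shuffle3_coef (x y z w : word) : int :=
  \sum_(t <- shuffle y z) shuffle_coef x t w.

Lemma shuffle3_coef_nil (x y z : word) :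
  shuffle3_coef x y z [::] = [&& x == [::], y == [::] & z == [::]]%:R.
Proof.
rewrite /shuffle3_coef; under eq_bigr do rewrite shuffle_coef_nil.
case: (x == [::]) => /=; last by rewrite big1.
by rewrite -(shuffle_coef_nil y z); apply: eq_bigr => t _; rewrite eq_sym.
Qed.

Lemma shuffle3_coef_cons (e : nat) (x y z w : word) : shuffle3_coef x y z (e :: w) =
  (ohead x == Some e)%:R * shuffle3_coef (behead x) y z w +
  (ohead y == Some e)%:R * shuffle3_coef x (behead y) z w +
  (ohead z == Some e)%:R * shuffle3_coef x y (behead z) w.
Proof.
rewrite /shuffle3_coef; under eq_bigr do rewrite shuffle_coef_cons.
by rewrite big_split /= -mulr_sumr (big_shuffle_ohead e y z (shuffle_coef x^~ w)) addrA.
Qed.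

Section AltSplitSum.

Variables (T : eqType) (R : pzRingType).
Implicit Types (G H : seq T -> seq T -> R) (u : seq T).

Definition alt_split_sum G u : R :=
  \sum_(i < (size u).+1) (-1) ^+ size (drop i u) * G (take i u) (drop i u).

Lemma eq_alt_split_sum G H u :
  (forall x y, G x y = H x y) -> alt_split_sum G u = alt_split_sum H u.
Proof. by move=> GH; apply: eq_bigr => i _; rewrite GH. Qed.

Lemma alt_split_sumD G H u :
  alt_split_sum (fun x y => G x y + H x y) u = alt_split_sum G u + alt_split_sum H u.
Proof. by rewrite -big_split; apply: eq_bigr => i _; rewrite mulrDr. Qed.

Lemma alt_split_sumZ (c : R) G u :
  alt_split_sum (fun x y => c * G x y) u = c * alt_split_sum G u.
Proof.
by rewrite mulr_sumr; apply: eq_bigr => i _; rewrite mulrA -commr_sign -mulrA.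
Qed.

Lemma alt_split_sum_nil G : alt_split_sum G [::] = G [::] [::].
Proof. by rewrite /alt_split_sum big_ord_recl big_ord0 mul1r addr0. Qed.

Lemma alt_split_sum_cons G (b : T) u : alt_split_sum G (b :: u) =
  (-1) ^+ (size u).+1 * G [::] (b :: u) + alt_split_sum (fun x => G (b :: x)) u.
Proof. by rewrite /alt_split_sum big_ord_recl. Qed.

Lemma alt_split_sum_rcons G u (d : T) : alt_split_sum G (rcons u d) =
  G (rcons u d) [::] - alt_split_sum (fun x y => G x (rcons y d)) u.
Proof.
rewrite /alt_split_sum big_ord_recr /= drop_oversize ?take_oversize ?size_rcons //.
rewrite mul1r addrC.
congr (_ + _); rewrite -sumrN; apply: eq_bigr => i _.
have le_iu : (i <= size u)%N := ltn_ord i.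
by rewrite drop_rcons // -[rcons u d]cats1 takel_cat // size_rcons exprS mulN1r mulNr.
Qed.

Lemma alt_split_sum_ohead_take (e b : T) G u :
  alt_split_sum (fun x y => (ohead x == Some e)%:R * G (behead x) y) (b :: u) =
  (b == e)%:R * alt_split_sum G u.
Proof.
by rewrite alt_split_sum_cons /= mul0r mulr0 add0r (inj_eq Some_inj) alt_split_sumZ.
Qed.

Lemma alt_split_sum_ohead_rev (e d : T) G u :
  alt_split_sum (fun x y => (ohead (rev y) == Some e)%:R * G x (behead (rev y)))
    (rcons u d) =
  - ((d == e)%:R * alt_split_sum (fun x y => G x (rev y)) u).
Proof.
rewrite alt_split_sum_rcons /= mul0r add0r -alt_split_sumZ.
by congr (- _); apply: eq_alt_split_sum => x y; rewrite rev_rcons /= (inj_eq Some_inj).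
Qed.

End AltSplitSum.

(* Coefficient of w in (sum_(u1 u2 = u) (-1)^|u2| u1 ⧢ rev u2) ⧢ v; the inner
   sum is the convolution of the identity with the antipode of the shuffle
   Hopf algebra. *)
Definition antipode_coef (u v w : word) : int :=
  alt_split_sum (fun x y => shuffle3_coef x (rev y) v w) u.

Lemma antipode_coef_eq0 (u v w : word) : u != [::] -> antipode_coef u v w = 0.
Proof.
elim: w u v => [|e w IH] u v u_ne0.
  rewrite /antipode_coef /alt_split_sum big1 // => i _.
  rewrite shuffle3_coef_nil; case: and3P => [[/eqP take0 /eqP drop0 _]|_].
    by move: u_ne0; rewrite -[u in u != _](cat_take_drop i) take0 -[drop i u]revK drop0.
  by rewrite mulr0.
rewrite /antipode_coef; under eq_alt_split_sum => x y do rewrite shuffle3_coef_cons.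
rewrite !alt_split_sumD [X in _ + X = 0]alt_split_sumZ.
rewrite -/(antipode_coef u (behead v) w) IH // mulr0 addr0.
case: u u_ne0 => // b u _.
rewrite (alt_split_sum_ohead_take e b (fun x y => shuffle3_coef x (rev y) v w)).
rewrite [in X in _ + X](lastI b u).
rewrite (alt_split_sum_ohead_rev e _ (fun x r => shuffle3_coef x r v w)).
rewrite -!/(antipode_coef _ v w).
case: u => [|c u]; first by rewrite subrr.
by rewrite !IH // !mulr0 subrr.
Qed.

Definition rhs7_coef (a : nat) (u v w : word) : int :=
  alt_split_sum (fun x y => \sum_(t <- shuffle (rev y) v) shuffle_coef x (a :: t) w) u.

Lemma rhs7_coefE (a : nat) (u v w : word) : rhs7_coef a u v w = (w == u ++ a :: v)%:R.
Proof.
elim: u w => [|b u IH] [|e w].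
- by rewrite /rhs7_coef alt_split_sum_nil big_seq1 shuffle_coef_nil.
- by rewrite /rhs7_coef alt_split_sum_nil big_seq1 /shuffle_coef big_seq1 eq_sym.
- rewrite /rhs7_coef /alt_split_sum big1 // => i _.
  by rewrite big1 ?mulr0 // => t _; rewrite shuffle_coef_nil andbF.
have lead_e x (s : seq word) : \sum_(t <- s) shuffle_coef x (a :: t) (e :: w) =
    (ohead x == Some e)%:R * \sum_(t <- s) shuffle_coef (behead x) (a :: t) w +
    (a == e)%:R * \sum_(t <- s) shuffle_coef x t w.
  rewrite !mulr_sumr -big_split; apply: eq_bigr => t _.
  by rewrite shuffle_coef_cons /= (inj_eq Some_inj).
rewrite /rhs7_coef; under eq_alt_split_sum => x y do rewrite lead_e.
rewrite alt_split_sumD alt_split_sumZ -/(antipode_coef (b :: u) v w) antipode_coef_eq0 //.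
rewrite (alt_split_sum_ohead_take e b
           (fun x y => \sum_(t <- shuffle (rev y) v) shuffle_coef x (a :: t) w)).
by rewrite -/(rhs7_coef a u v w) IH mulr0 addr0 -natrM mulnb eqseq_cons eq_sym.
Qed.

Lemma coef_word (x w : word) : coef (lc_word x) w = (w == x)%:R.
Proof. by rewrite /coef big_mkcond big_seq1 /= eq_sym; case: (_ == _). Qed.

Lemma coef_cat (x y : lc) (w : word) : coef (x ++ y) w = coef x w + coef y w.
Proof. exact: big_cat. Qed.

Lemma coef_flatten (xs : seq lc) (w : word) :
  coef (flatten xs) w = \sum_(x <- xs) coef x w.
Proof.
elim: xs => [|x xs IH]; first by rewrite big_nil /coef big_nil.
by rewrite /= coef_cat IH big_cons.
Qed.

Lemma coef_scale (c : int) (x : lc) (w : word) : coef (lc_scale c x) w = c * coef x w.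
Proof. by rewrite /coef big_map mulr_sumr. Qed.

Lemma coef_shuffle_word (x : word) (y : lc) (w : word) :
  coef (lc_shuffle (lc_word x) y) w = \sum_(q <- y) q.1 * shuffle_coef x q.2 w.
Proof.
rewrite /lc_shuffle /= cats0 coef_flatten big_map; apply: eq_bigr => q _.
rewrite /coef big_map mulr_sumr big_mkcond /=; apply: eq_bigr => t _.
by rewrite mul1r mulr_natr mulrb.
Qed.

Lemma coef_rhs7 (u v : word) (a : nat) (w : word) :
  coef (rhs7 u v a) w = rhs7_coef a u v w.
Proof.
rewrite /rhs7 coef_flatten big_map -[iota _ _]/(index_iota 0 (size u).+1) big_mkord.
apply: eq_bigr => i _.
rewrite coef_scale coef_shuffle_word /lc_prepend big_map /lc_shuffle /= cats0 !big_map.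
by congr (_ * _); apply: eq_bigr => t _; rewrite !mul1r.
Qed.

Theorem mainTheorem7 (u v : word) (a : nat) :
  forall w : word, coef (lc_word (u ++ a :: v)) w = coef (rhs7 u v a) w.
Proof. by move=> w; rewrite coef_word coef_rhs7 rhs7_coefE. Qed.
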